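(* Let $A\in\mathbb{R}^{n\times n}$, $B\in\mathbb{R}^{n\times m}$ with $(A,B)$ stabilizable, and let $Q\succ 0$, $R\succ 0$ be symmetric weight matrices. Let $\tilde F\in\mathbb{R}^{m\times n}$ be such that $A+B\tilde F$ is Hurwitz and let $\tilde P\succ 0$ be the unique solution of $(A+B\tilde F)^T\tilde P+\tilde P(A+B\tilde F)+Q+\tilde F^TR\tilde F=0$; set $V(x):=x^T\tilde P x$. Consider $\dot x(t)=Ax(t)+Bu(t)$, $x(0)=x_0$, under the sample-and-hold law $u(t)=F_k x(t_k)$ for $t\in[t_k,t_{k+1})$, with triggering times $0=t_0<t_1<\cdots$, inter-execution times $\delta_k=t_{k+1}-t_k$ and gains $F_k\in\mathbb{R}^{m\times n}$. Suppose that for some given $\alpha>1$ the sequences $\{t_k\}$, $\{\delta_k\}$, $\{F_k\}$ satisfy, for every $k\ge 0$ and every $\xi\in[0,\delta_k]$, $$J_k(F_k,\xi;x_k)\le \alpha\big(V(x(t_k))-V(x(t_k+\xi))\big).$$ Then the control law is stabilizing. Moreover, for all nonzero $x_0\in\mathbb{R}^n$, the relative performance loss satisfies $\nu(x_0)\le \alpha-1$.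
   Context: $x_k:=x(t_k)$. For $\xi\ge 0$, $J_k(F_k,\xi;x_k):=\int_{t_k}^{t_k+\xi}\big(x(t)^TQx(t)+u(t)^TRu(t)\big)\,dt$, where on this interval the input is held at $u(t)=F_kx_k$. The total cost is $J(x_0):=\sum_{k=0}^{\infty}J_k(F_k,\delta_k;x_k)$, the benchmark cost is $\tilde J(x_0):=x_0^T\tilde P x_0$, and the relative performance loss is $\nu(x_0):=\big(J(x_0)-\tilde J(x_0)\big)/\tilde J(x_0)$. *)

From HB Require Import structures.
From mathcomp Require Import all_boot all_order all_algebra.
From mathcomp Require Import all_classical all_reals all_analysis.
From mathcomp Require Import complex.
Set Implicit Arguments. Unset Strict Implicit. Unset Printing Implicit Defensive.
Import Order.TTheory GRing.Theory Num.Theory.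
Import numFieldNormedType.Exports.
Local Open Scope classical_set_scope.
Local Open Scope ring_scope.

Section Defs.
Variable R : realType.

Definition posdef (n : nat) (M : 'M[R]_n) : Prop :=
  M^T = M /\ forall v : 'cV[R]_n, v != 0 -> 0 < (v^T *m M *m v) 0 0.

Definition hurwitz (n : nat) (M : 'M[R]_n) : Prop :=
  forall l : R[i], eigenvalue (map_mx (real_complex R) M) l -> complex.Re l < 0.

Definition stabilizable (n m : nat) (A : 'M[R]_n) (B : 'M[R]_(n, m)) : Prop :=
  exists F : 'M[R]_(m, n), hurwitz (A + B *m F).

Definition quadf (n : nat) (P : 'M[R]_n) (v : 'cV[R]_n) : R := (v^T *m P *m v) 0 0.

(* x : R -> R^n is the closed-loop trajectory of  xdot = A x + B u,  x(0) = x0,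
   under the sample-and-hold law u(t) = F_k x(t_k) on [t_k, t_{k+1}):
   x is continuous on [0,+oo) and satisfies the ODE on every (t_k, t_{k+1}). *)
Definition sampled_trajectory (n m : nat) (A : 'M[R]_n) (B : 'M[R]_(n, m))
    (tk : nat -> R) (F : nat -> 'M[R]_(m, n)) (x0 : 'cV[R]_n)
    (x : R -> 'cV[R]_n) : Prop :=
  x 0 = x0 /\
  (forall i : 'I_n, {within `[0, +oo[, continuous (fun t => x t i 0)}) /\
  (forall (k : nat) (t : R), tk k < t < tk k.+1 -> forall i : 'I_n,
     is_derive t 1 (fun s => x s i 0) ((A *m x t + B *m (F k *m x (tk k))) i 0)).

Definition stage_cost (n m : nat) (Q : 'M[R]_n) (Rw : 'M[R]_m)
    (tk : nat -> R) (F : nat -> 'M[R]_(m, n)) (x : R -> 'cV[R]_n)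
    (k : nat) (xi : R) : \bar R :=
  (\int[@lebesgue_measure R]_(t in `[tk k, (tk k + xi)%R]%classic)
     (((x t)^T *m Q *m x t
       + (F k *m x (tk k))^T *m Rw *m (F k *m x (tk k))) 0 0)%:E)%E.

(* total cost J(x0) = sum_k J_k(F_k, delta_k; x_k) (a series of nonnegative
   extended reals, possibly +oo) *)
Definition total_cost (n m : nat) (Q : 'M[R]_n) (Rw : 'M[R]_m)
    (tk : nat -> R) (F : nat -> 'M[R]_(m, n)) (x : R -> 'cV[R]_n) : \bar R :=
  (\sum_(0 <= k <oo) stage_cost Q Rw tk F x k (tk k.+1 - tk k))%E.

(* relative performance loss nu(x0) = (J(x0) - Jtilde(x0)) / Jtilde(x0),
   Jtilde(x0) = x0^T Ptilde x0 *)
Definition perf_loss (n m : nat) (Q : 'M[R]_n) (Rw : 'M[R]_m) (Pt : 'M[R]_n)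
    (tk : nat -> R) (F : nat -> 'M[R]_(m, n)) (x : R -> 'cV[R]_n)
    (x0 : 'cV[R]_n) : \bar R :=
  ((total_cost Q Rw tk F x - (quadf Pt x0)%:E) * ((quadf Pt x0)^-1)%:E)%E.

End Defs.

From HB Require Import structures.
From mathcomp Require Import all_boot all_order all_algebra.
From mathcomp Require Import all_classical all_reals all_analysis.
From mathcomp Require Import complex.
From mathcomp Require Import ring lra measurable_realfun.
Import Order.TTheory GRing.Theory Num.Theory.
Import numFieldNormedType.Exports.
Local Open Scope classical_set_scope.
Local Open Scope ring_scope.
Set Implicit Arguments. Unset Strict Implicit. Unset Printing Implicit Defensive.

(** The decrease condition, summed over the sampling intervals, telescopes:
    the total cost is at most [alpha * V x0], which is the performance bound.
    For stability, on each interval [[t_k, t_(k+1)]] the same condition bounds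
    both the integral of the running cost and, through the derivative of
    [x_i ^ 2], the oscillation of [x_i ^ 2] by multiples of
    [V x_k - V x_(k+1)]; these differences are summable because [V x_k] is
    nonnegative and nonincreasing.  A discrete Barbalat argument concludes:
    were [x_i ^ 2 >= eps] at arbitrarily late times, the small oscillation
    would keep [x_i ^ 2 >= eps / 2] on all later intervals, and the integral of
    the running cost would be infinite. *)

Lemma row_mul_entry (R : pzRingType) n p (M : 'M[R]_(n, p)) (v : 'cV[R]_p) i :
  (row i M *m v) 0 0 = (M *m v) i 0.
Proof. by rewrite -row_mul mxE. Qed.

Lemma normr_2mulD_le (R : realFieldType) (y p q : R) :
  `|2 * y * (p + q)| <= 2 * y ^+ 2 + p ^+ 2 + q ^+ 2.
Proof.
have := sqr_ge0 (y - p); have := sqr_ge0 (y - q).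
have := sqr_ge0 (y + p); have := sqr_ge0 (y + q).
rewrite ler_norml !expr2 => h1 h2 h3 h4; apply/andP; split; nra.
Qed.

Section QuadraticForm.
Variables (R : realType) (n : nat).
Implicit Types (P : 'M[R]_n) (v w : 'cV[R]_n).

Definition bilf P w v := (w^T *m P *m v) 0 0.

Lemma bilfC P w v : P^T = P -> bilf P w v = bilf P v w.
Proof.
move=> sP; have -> : bilf P v w = ((v^T *m P *m w)^T) 0 0 by rewrite mxE.
by rewrite /bilf !trmx_mul trmxK sP mulmxA.
Qed.

Lemma quadf_lincomb P a b w v : P^T = P ->
  quadf P (a *: w + b *: v) =
  a ^+ 2 * quadf P w + 2 * a * b * bilf P w v + b ^+ 2 * quadf P v.
Proof.
move=> sP; have -> : quadf P (a *: w + b *: v) =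
    a * a * quadf P w + a * b * bilf P w v + b * a * bilf P v w + b * b * quadf P v.
  rewrite /quadf /bilf.
  have -> : (a *: w + b *: v)^T = a *: w^T + b *: v^T by rewrite linearD !linearZ.
  rewrite !mulmxDl !mulmxDr.
  by rewrite -!scalemxAl -!scalemxAr !scalerA !mxE addrA.
by rewrite [bilf P v w]bilfC //; ring.
Qed.

Lemma posdef_quadf_ge0 P v : posdef P -> 0 <= quadf P v.
Proof.
move=> [_ pP]; have [->|v0] := eqVneq v 0; last exact/ltW/pP.
by rewrite /quadf mulmx0 mxE.
Qed.

Lemma posdef_unitmx P : posdef P -> P \in unitmx.
Proof.
move=> [_ pP]; rewrite unitmxE unitfE; apply/negP => /det0P [u u0 uP].
have := pP u^T; rewrite trmxK trmx_eq0 => /(_ u0).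
by rewrite uP mul0mx mxE ltxx.
Qed.

Lemma posdef_bilf_CauchySchwarz P w v :
  posdef P -> bilf P w v ^+ 2 <= quadf P w * quadf P v.
Proof.
move=> hP; have sP := hP.1.
have [->|v0] := eqVneq v 0.
  by rewrite /bilf /quadf !mulmx0 mxE expr0n /= mulr0.
have qv_gt0 : 0 < quadf P v by exact: hP.2.
have := posdef_quadf_ge0 (quadf P v *: w + (- bilf P w v) *: v) hP.
rewrite quadf_lincomb // => h.
have : 0 <= quadf P v * (quadf P v * quadf P w - bilf P w v ^+ 2).
  by move: h; rewrite !expr2; nra.
by rewrite pmulr_rge0 // subr_ge0 mulrC.
Qed.

(* [a *m v = bilf P (P^-1 a^T) v], then Cauchy-Schwarz. *)
Lemma sqr_linear_le_quadf P (a : 'rV[R]_n) : posdef P ->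
  exists2 c, 0 <= c & forall v, (a *m v) 0 0 ^+ 2 <= c * quadf P v.
Proof.
move=> hP; set w := invmx P *m a^T.
exists (quadf P w); first exact: posdef_quadf_ge0.
move=> v; have -> : (a *m v) 0 0 = bilf P w v.
  rewrite /bilf /w trmx_mul trmxK trmx_inv hP.1.
  by rewrite -(mulmxA a) mulVmx ?mulmx1 ?posdef_unitmx.
exact: posdef_bilf_CauchySchwarz.
Qed.
End QuadraticForm.

Section ContinuousWithin.
Variables (R : realType) (D : set R).

Lemma continuous_within_cst (c : R) : {within D, continuous (fun _ => c)}.
Proof. by move=> t; apply: cst_continuous. Qed.

Lemma continuous_withinD (f g : R -> R) :
  {within D, continuous f} -> {within D, continuous g} ->
  {within D, continuous (fun t => f t + g t)}.
Proof. by move=> cf cg t; apply: continuousD; [exact: cf|exact: cg]. Qed.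

Lemma continuous_withinM (f g : R -> R) :
  {within D, continuous f} -> {within D, continuous g} ->
  {within D, continuous (fun t => f t * g t)}.
Proof. by move=> cf cg t; apply: continuousM; [exact: cf|exact: cg]. Qed.

Lemma continuous_within_norm (f : R -> R) :
  {within D, continuous f} -> {within D, continuous (fun t => `|f t|)}.
Proof. by move=> cf t; apply: (continuous_comp (cf t)); exact: norm_continuous. Qed.

Lemma continuous_within_sum (I : Type) (s : seq I) (f : I -> R -> R) :
  (forall i, {within D, continuous f i}) ->
  {within D, continuous (fun t => \sum_(i <- s) f i t)}.
Proof.
move=> cf; elim: s => [|i s IHs].
  by under eq_fun do rewrite big_nil; exact: continuous_within_cst.
by under eq_fun do rewrite big_cons; exact: continuous_withinD.
Qed.

Definition mx_continuous_within p q (M : R -> 'M[R]_(p, q)) :=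
  forall i j, {within D, continuous (fun t => M t i j)}.

Lemma mx_continuous_within_cst p q (M : 'M[R]_(p, q)) :
  mx_continuous_within (fun _ => M).
Proof. by move=> i j; exact: continuous_within_cst. Qed.

Lemma mx_continuous_withinD p q (M N : R -> 'M[R]_(p, q)) :
  mx_continuous_within M -> mx_continuous_within N ->
  mx_continuous_within (fun t => M t + N t).
Proof. by move=> cM cN i j; under eq_fun do rewrite mxE; exact: continuous_withinD. Qed.

Lemma mx_continuous_withinM p q r (M : R -> 'M[R]_(p, q)) (N : R -> 'M[R]_(q, r)) :
  mx_continuous_within M -> mx_continuous_within N ->
  mx_continuous_within (fun t => M t *m N t).
Proof.
move=> cM cN i j; under eq_fun do rewrite mxE.
by apply: continuous_within_sum => k; exact: continuous_withinM.
Qed.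

Lemma mx_continuous_within_tr p q (M : R -> 'M[R]_(p, q)) :
  mx_continuous_within M -> mx_continuous_within (fun t => (M t)^T).
Proof. by move=> cM i j; under eq_fun do rewrite mxE; exact: cM. Qed.
End ContinuousWithin.

Section IntervalIntegral.
Variable R : realType.
Local Notation mu := (@lebesgue_measure R).

Lemma continuous_within_measurable (a b : R) (f : R -> R) :
  {within `[a, b], continuous f} -> measurable_fun `[a, b] (fun t => (f t)%:E).
Proof.
by move=> cf; apply/measurable_EFinP; exact: subspace_continuous_measurable_fun.
Qed.

Lemma integral_itv_derive_sqr (a b : R) (y dy : R -> R) : a < b ->
  {within `[a, b], continuous y} -> {within `[a, b], continuous dy} ->
  (forall s, a < s < b -> is_derive s 1 y (dy s)) ->
  (\int[mu]_(s in `[a, b]) (2 * y s * dy s)%:E = (y b ^+ 2 - y a ^+ 2)%:E)%E.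
Proof.
move=> ab cy cdy y'.
have sqr_y' s : a < s < b -> is_derive s 1 (fun t => y t ^+ 2) (2 * y s * dy s).
  move=> /y' ys; apply: is_derive_eq.
  by change (y s * dy s + y s * dy s = 2 * y s * dy s); ring.
have cy2 : {within `[a, b], continuous (fun t => y t ^+ 2)}.
  rewrite (_ : (fun t => y t ^+ 2) = (fun t => y t * y t)).
    exact: continuous_withinM.
  by apply/funext => t; rewrite expr2.
rewrite EFinB.
apply: (@continuous_FTC2 R (fun s => 2 * y s * dy s) (fun t => y t ^+ 2) a b ab).
- by apply: continuous_withinM => //; apply: continuous_withinM => //;
    exact: continuous_within_cst.
- have [_ ya yb] := (continuous_within_itvP _ ab).1 cy2.
  split => // s; rewrite in_itv /= => /sqr_y' ys; exact: ex_derive.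
- by move=> s; rewrite in_itv /= => /sqr_y' ys; rewrite derive1E derive_val.
Qed.

Lemma abse_integral_itv_le (a b c K : R) (f g : R -> R) : a <= b -> b <= c ->
  {within `[a, c], continuous f} -> {within `[a, c], continuous g} ->
  0 <= K -> (forall t, 0 <= g t) -> (forall t, `|f t| <= K * g t) ->
  (`|\int[mu]_(t in `[a, b]) (f t)%:E| <= K%:E * \int[mu]_(t in `[a, c]) (g t)%:E)%E.
Proof.
move=> ab bc cf cg K0 g0 fg.
have sub : `[a, b] `<=` `[a, c] by apply: subset_itvl; rewrite bnd_simp.
have cf' := continuous_subspaceW sub cf.
have cg' := continuous_subspaceW sub cg.
apply: le_trans.
  by apply: le_abse_integral => //; exact: continuous_within_measurable cf'.
under eq_integral do rewrite abse_EFin.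
apply: (@le_trans _ _ (\int[mu]_(t in `[a, b]) (K * g t)%:E)%E).
  apply: ge0_le_integral => //.
  - by apply: continuous_within_measurable; exact: continuous_within_norm.
  - apply: continuous_within_measurable; apply: continuous_withinM => //.
    exact: continuous_within_cst.
  - by move=> t _; rewrite lee_fin.
under eq_integral do rewrite EFinM.
have gE0 t : (0 <= (g t)%:E)%E by rewrite lee_fin.
rewrite ge0_integralZl_EFin //; last exact: continuous_within_measurable.
apply: lee_wpmul2l; first by rewrite lee_fin.
by apply: ge0_subset_integral => //; exact: continuous_within_measurable cg.
Qed.

Lemma integral_itv_ge (a b c : R) (g : R -> R) : a < b -> 0 <= c ->
  {within `[a, b], continuous g} -> (forall t, a <= t <= b -> c <= g t) ->
  ((c * (b - a))%:E <= \int[mu]_(t in `[a, b]) (g t)%:E)%E.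
Proof.
move=> ab c0 cg cg_ge; rewrite EFinM.
have <- : (\int[mu]_(t in `[a, b]) (cst c%:E) t = c%:E * (b - a)%:E)%E.
  rewrite integral_cst //; congr (_ * _)%E.
  apply: (eq_trans (lebesgue_measure_itv `[a, b])).
  by rewrite /= lte_fin ab -EFinD.
by apply: ge0_le_integral => //; exact: continuous_within_measurable.
Qed.
End IntervalIntegral.

Section SampleTimes.
Variables (R : realType) (tk : nat -> R).
Hypotheses (tk_incr : forall k, tk k < tk k.+1) (tk_oo : tk k @[k --> \oo] --> +oo).

Lemma sample_times_le : {homo tk : i j / (i <= j)%N >-> i <= j}.
Proof. by apply: homo_leq => [//|y x z|k]; [exact: le_trans|exact: ltW]. Qed.

Lemma sample_times_gt (c : R) k0 : exists2 j, (k0 <= j)%N & c < tk j.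
Proof.
have [N _ tkN] := (cvgryPge _).1 tk_oo (c + 1).
exists (maxn N k0); first exact: leq_maxr.
by apply: lt_le_trans (tkN _ _); [rewrite ltrDl|rewrite /= leq_maxl].
Qed.

Lemma sample_times_cover N t : tk N <= t ->
  exists2 k, (N <= k)%N & tk k <= t <= tk k.+1.
Proof.
move=> tN; have [j0 _ tj0] := sample_times_gt t 0.
have [j t_tkj jmin] := ex_minnP (ex_intro (fun j => t < tk j) j0 tj0).
have Nj : (N < j)%N.
  rewrite ltnNge; apply/negP => /sample_times_le tkjN.
  by move: t_tkj; rewrite ltNge (le_trans tkjN tN).
exists j.-1; first by rewrite -ltnS prednK // (leq_ltn_trans _ Nj).
rewrite prednK ?(leq_ltn_trans _ Nj) // (ltW t_tkj) andbT leNgt.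
by apply/negP => /jmin; rewrite leqNgt ltn_predL (leq_ltn_trans _ Nj).
Qed.
End SampleTimes.

Lemma nonincreasing_tail_small (R : realType) (W : nat -> R) :
  (forall k, 0 <= W k) -> (forall k, W k.+1 <= W k) ->
  forall eta, 0 < eta -> exists N, forall j, (N <= j)%N -> W N - W j <= eta.
Proof.
move=> W_ge0 W_decr eta eta_gt0.
have W_noninc : nonincreasing_seq W by apply/nonincreasing_seqP.
have W_cvg : cvgn W.
  apply/cvg_ex; eexists; apply: nonincreasing_cvgn => //.
  by exists 0 => r [k _ <-].
have W_ge_lim := nonincreasing_cvgn_ge W_noninc W_cvg.
move/cvgrPdist_lt : W_cvg => /(_ eta eta_gt0) [N _ WN].
exists N => j _; have := WN N (leqnn N); have := W_ge_lim j.
by rewrite /= ltr_norml => ? /andP[? ?]; lra.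
Qed.

Section Telescope.
Variable R : realFieldType.
Implicit Types (u w : nat -> R).

Lemma telescope_ler u w k j : (k <= j)%N ->
  (forall i, (k <= i < j)%N -> u i.+1 - u i <= w i - w i.+1) ->
  u j - u k <= w k - w j.
Proof.
move=> kj uw; rewrite -(telescope_sumr u kj) -[w k - w j]opprB.
rewrite -(telescope_sumr w kj) -sumrN; apply: ler_sum_nat => i /uw.
by rewrite opprB.
Qed.

Lemma telescope_ler_norm u w k j : (k <= j)%N ->
  (forall i, (k <= i < j)%N -> `|u i.+1 - u i| <= w i - w i.+1) ->
  `|u j - u k| <= w k - w j.
Proof.
move=> kj uw; have uw_le i : (k <= i < j)%N ->
    u i.+1 - u i <= w i - w i.+1 /\ - u i.+1 - - u i <= w i - w i.+1.
  by move/uw; rewrite ler_norml => /andP[? ?]; split; lra.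
have := telescope_ler kj (fun i ki => (uw_le i ki).1).
have := @telescope_ler (fun i => - u i) w k j kj (fun i ki => (uw_le i ki).2).
by rewrite ler_norml => ? ?; apply/andP; split; lra.
Qed.
End Telescope.

Lemma sampled_barbalat (R : realType) (tk W : nat -> R) (z : R -> R) (C D : R) :
  (forall k, tk k < tk k.+1) -> tk k @[k --> \oo] --> +oo ->
  (forall k, 0 <= W k) -> (forall k, W k.+1 <= W k) -> 0 <= C -> 0 <= D ->
  (forall k t, tk k <= t <= tk k.+1 -> `|z t - z (tk k)| <= C * (W k - W k.+1)) ->
  (forall k c, 0 <= c -> (forall s, tk k <= s <= tk k.+1 -> c <= z s) ->
     c * (tk k.+1 - tk k) <= D * (W k - W k.+1)) ->
  forall eps, 0 < eps -> \forall t \near +oo, z t < eps.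
Proof.
move=> tk_incr tk_oo W_ge0 W_decr C_ge0 D_ge0 z_osc z_mass eps eps_gt0.
have W_le : {homo W : i j / (i <= j)%N >-> j <= i}.
  by apply: homo_leq => [//|y x w yx wy|//]; exact: le_trans wy yx.
have C4_gt0 : 0 < 4 * (C + 1) by lra.
(* [eta] is small enough that the oscillation terms below stay under [eps / 2]. *)
pose eta := eps / (4 * (C + 1)); have eta_gt0 : 0 < eta by exact: divr_gt0.
have C_eta : C * eta <= eps / 4.
  by rewrite /eta mulrA ler_pdivrMr //; lra.
have [N WN] := nonincreasing_tail_small W_ge0 W_decr eta_gt0.
near=> t; rewrite ltNge; apply/negP => z_t.
have tN : tk N <= t by near: t; apply: nbhs_pinfty_ge; exact: num_real.
have [k Nk t_k] := sample_times_cover tk_incr tk_oo tN.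
have z_ge i s : (k <= i)%N -> tk i <= s <= tk i.+1 -> eps / 2 <= z s.
  move=> ki s_i.
  have osc_ki : `|z (tk i) - z (tk k)| <= C * W k - C * W i.
    apply: (@telescope_ler_norm _ (fun l => z (tk l)) (fun l => C * W l)) => // l _.
    by rewrite -mulrBr; apply: z_osc; rewrite lexx ltW.
  have := z_osc _ _ s_i; have := z_osc _ _ t_k; move: osc_ki.
  rewrite !ler_norml => /andP[zi_ge _] /andP[_ zt_le] /andP[zs_ge _].
  have d1 : W k - W k.+1 <= eta.
    by have := WN k.+1 (leqW Nk); have := W_le _ _ Nk; lra.
  have d2 : W k - W i.+1 <= eta.
    by have := WN i.+1 (leqW (leq_trans Nk ki)); have := W_le _ _ Nk; lra.
  have := ler_wpM2l C_ge0 d1; have := ler_wpM2l C_ge0 d2; lra.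
have [j kj tkj] := sample_times_gt tk_oo (tk k + 2 * D * W k / eps) k.
have mass : eps / 2 * tk j - eps / 2 * tk k <= D * W k - D * W j.
  apply: (@telescope_ler _ (fun l => eps / 2 * tk l) (fun l => D * W l)) => //.
  move=> i /andP[ki _].
  rewrite -!mulrBr; apply: z_mass => [|s]; first lra.
  exact: z_ge.
move: tkj; rewrite -ltrBrDl ltr_pdivrMr //.
have := mulr_ge0 D_ge0 (W_ge0 j); lra.
Unshelve. all: by end_near.
Qed.

Section SampledClosedLoop.
Variables (R : realType) (n m : nat) (A : 'M[R]_n) (B : 'M[R]_(n, m)).
Variables (Q : 'M[R]_n) (Rw : 'M[R]_m) (Pt : 'M[R]_n) (alpha : R).
Variables (tk : nat -> R) (F : nat -> 'M[R]_(m, n)) (x0 : 'cV[R]_n) (x : R -> 'cV[R]_n).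
Hypotheses (Q_pd : posdef Q) (Rw_pd : posdef Rw) (Pt_pd : posdef Pt).
Hypothesis alpha_gt0 : 0 < alpha.
Hypotheses (tk0 : tk 0%N = 0) (tk_incr : forall k, tk k < tk k.+1).
Hypothesis tk_oo : tk k @[k --> \oo] --> +oo.
Hypothesis x_traj : sampled_trajectory A B tk F x0 x.
Local Notation mu := (@lebesgue_measure R).
Local Notation V k := (quadf Pt (x (tk k))).
Local Notation stage_cost := (stage_cost Q Rw tk F x).

Definition value_decrease_bound := forall k xi, 0 <= xi <= tk k.+1 - tk k ->
  (stage_cost k xi <= (alpha * (V k - quadf Pt (x (tk k + xi))))%:E)%E.
Hypothesis decr : value_decrease_bound.

Definition running_cost k t := quadf Q (x t) + quadf Rw (F k *m x (tk k)).

Lemma stage_costE k xi :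
  stage_cost k xi = (\int[mu]_(t in `[tk k, (tk k + xi)%R]) (running_cost k t)%:E)%E.
Proof. by apply: eq_integral => t _; rewrite mxE. Qed.

Lemma running_cost_ge0 k t : 0 <= running_cost k t.
Proof. by apply: addr_ge0; exact: posdef_quadf_ge0. Qed.

Lemma stage_cost_ge0 k xi : (0 <= stage_cost k xi)%E.
Proof.
by rewrite stage_costE; apply: integral_ge0 => t _; rewrite lee_fin running_cost_ge0.
Qed.

Lemma stage_cost_sample_le k :
  (stage_cost k (tk k.+1 - tk k) <= (alpha * (V k - V k.+1))%:E)%E.
Proof.
by have := @decr k (tk k.+1 - tk k); rewrite subrKC lexx subr_ge0 ltW //; apply.
Qed.

Lemma sample_value_decr k : V k.+1 <= V k.
Proof.
have := le_trans (stage_cost_ge0 k (tk k.+1 - tk k)) (stage_cost_sample_le k).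
by rewrite lee_fin pmulr_rge0 // subr_ge0.
Qed.

Lemma total_cost_le : (total_cost Q Rw tk F x <= (alpha * V 0%N)%:E)%E.
Proof.
have partial N : (\sum_(0 <= k < N) stage_cost k (tk k.+1 - tk k)
    <= (alpha * (V 0%N - V N))%:E)%E.
  elim: N => [|N IHN]; first by rewrite big_geq // subrr mulr0.
  rewrite big_nat_recr //=; apply: le_trans (leeD IHN (stage_cost_sample_le N)) _.
  by rewrite -EFinD -mulrDr addrA subrK.
apply: lime_le; first by apply: is_cvg_nneseries => k _ _; exact: stage_cost_ge0.
apply: nearW => N; apply: le_trans (partial N) _.
by rewrite lee_fin ler_pM2l // gerBl posdef_quadf_ge0.
Qed.

Lemma perf_loss_le : x0 != 0 -> (perf_loss Q Rw Pt tk F x x0 <= (alpha - 1)%:E)%E.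
Proof.
move=> x0_neq0; have V0_gt0 : 0 < quadf Pt x0 by exact: Pt_pd.2.
move: total_cost_le; rewrite tk0 x_traj.1 /perf_loss.
case: (total_cost _ _ _ _ _) => [J| |] //=.
  by rewrite !lee_fin => J_le; rewrite ler_pdivrMr // mulrBl mul1r lerD2r.
by rewrite addNye gt0_mulNye ?leNye // lte_fin invr_gt0.
Qed.

Definition closed_loop_field k t := A *m x t + B *m (F k *m x (tk k)).

Lemma sqr_state_le_running_cost i :
  exists2 c, 0 <= c & forall k t, x t i 0 ^+ 2 <= c * running_cost k t.
Proof.
have [c c_ge0 xQ] := sqr_linear_le_quadf (row i 1%:M) Q_pd.
exists c => // k t.
have -> : x t i 0 = (row i 1%:M *m x t) 0 0 by rewrite row_mul_entry mul1mx.
by apply: le_trans (xQ _) _; rewrite ler_wpM2l // lerDl posdef_quadf_ge0.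
Qed.

Lemma deriv_sqr_state_le_running_cost i : exists2 K, 0 <= K &
  forall k t, `|2 * x t i 0 * closed_loop_field k t i 0| <= K * running_cost k t.
Proof.
have [c1 c1_ge0 xQ] := sqr_linear_le_quadf (row i 1%:M) Q_pd.
have [c2 c2_ge0 AxQ] := sqr_linear_le_quadf (row i A) Q_pd.
have [c3 c3_ge0 BuRw] := sqr_linear_le_quadf (row i B) Rw_pd.
exists (2 * c1 + c2 + c3); first by rewrite !addr_ge0 ?mulr_ge0.
move=> k t; rewrite /closed_loop_field mxE.
rewrite -[(A *m _) i 0]row_mul_entry -[(B *m _) i 0]row_mul_entry.
have -> : x t i 0 = (row i 1%:M *m x t) 0 0 by rewrite row_mul_entry mul1mx.
apply: le_trans (normr_2mulD_le _ _ _) _.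
have le_running_cost c a : 0 <= c ->
    a <= c * quadf Q (x t) \/ a <= c * quadf Rw (F k *m x (tk k)) ->
    a <= c * running_cost k t.
  move=> c_ge0 [] /le_trans; apply; rewrite ler_wpM2l //.
    by rewrite lerDl posdef_quadf_ge0.
  by rewrite lerDr posdef_quadf_ge0.
have -> : (2 * c1 + c2 + c3) * running_cost k t =
    2 * (c1 * running_cost k t) + c2 * running_cost k t + c3 * running_cost k t.
  by ring.
apply: lerD; [apply: lerD|].
- by rewrite ler_wpM2l // le_running_cost //; left.
- by rewrite le_running_cost //; left.
- by rewrite le_running_cost //; right.
Qed.

Lemma sample_time_ge0 k : 0 <= tk k.
Proof. by rewrite -tk0; exact: sample_times_le. Qed.

Lemma state_continuous a b : 0 <= a -> mx_continuous_within `[a, b] x.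
Proof.
move=> a_ge0 i j; rewrite (ord1 j); apply: continuous_subspaceW (x_traj.2.1 i).
by move=> s; rewrite /= !in_itv /= andbT => /andP[/(le_trans a_ge0)].
Qed.

Lemma running_cost_continuous k a b : 0 <= a ->
  {within `[a, b], continuous (running_cost k)}.
Proof.
move=> a_ge0; have x_cont : mx_continuous_within `[a, b] x by exact: state_continuous.
apply: continuous_withinD; last exact: continuous_within_cst.
have xQx : mx_continuous_within `[a, b] (fun t => (x t)^T *m Q *m x t).
  apply: (mx_continuous_withinM _ x_cont).
  apply: (mx_continuous_withinM (mx_continuous_within_tr x_cont)).
  exact: mx_continuous_within_cst.
exact: xQx.
Qed.

Lemma closed_loop_field_continuous k a b i : 0 <= a ->
  {within `[a, b], continuous (fun t => closed_loop_field k t i 0)}.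
Proof.
move=> a_ge0; have x_cont : mx_continuous_within `[a, b] x by exact: state_continuous.
have f_cont : mx_continuous_within `[a, b] (closed_loop_field k).
  apply: mx_continuous_withinD; last exact: mx_continuous_within_cst.
  by apply: mx_continuous_withinM => //; exact: mx_continuous_within_cst.
exact: f_cont.
Qed.

Lemma integral_running_cost_sample_le k :
  (\int[mu]_(t in `[tk k, tk k.+1]) (running_cost k t)%:E
    <= (alpha * (V k - V k.+1))%:E)%E.
Proof. by have := stage_cost_sample_le k; rewrite stage_costE subrKC. Qed.

Lemma sqr_state_sample_osc i : exists2 C, 0 <= C & forall k t,
  tk k <= t <= tk k.+1 -> `|x t i 0 ^+ 2 - x (tk k) i 0 ^+ 2| <= C * (V k - V k.+1).
Proof.
have [K K_ge0 dK] := deriv_sqr_state_le_running_cost i.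
exists (K * alpha) => [|k t /andP[tk_t t_tk1]]; first by rewrite mulr_ge0 // ltW.
have [->|t_neq] := eqVneq t (tk k).
  by rewrite subrr normr0 mulr_ge0 ?mulr_ge0 ?subr_ge0 ?sample_value_decr // ltW.
have tk_lt_t : tk k < t by rewrite lt_neqAle eq_sym t_neq tk_t.
have y_cont b : {within `[tk k, b], continuous (fun s => x s i 0)}.
  exact: (@state_continuous (tk k) b (sample_time_ge0 k) i 0).
have f_cont b : {within `[tk k, b], continuous (fun s => closed_loop_field k s i 0)}.
  exact: closed_loop_field_continuous (sample_time_ge0 k).
have y_deriv s : tk k < s < t ->
    is_derive s 1 (fun s => x s i 0) (closed_loop_field k s i 0).
  by move=> /andP[tk_s s_t]; apply: x_traj.2.2; rewrite tk_s (lt_le_trans s_t).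
have y2_cont : {within `[tk k, tk k.+1],
    continuous (fun s => 2 * x s i 0 * closed_loop_field k s i 0)}.
  by apply: continuous_withinM => //; apply: continuous_withinM => //;
    exact: continuous_within_cst.
have := abse_integral_itv_le (ltW tk_lt_t) t_tk1 y2_cont
  (running_cost_continuous (sample_time_ge0 k)) K_ge0 (running_cost_ge0 k) (dK k).
have K_ge0E : (0 <= K%:E)%E by rewrite lee_fin.
rewrite integral_itv_derive_sqr // abse_EFin.
move=> /le_trans /(_ (lee_wpmul2l K_ge0E (integral_running_cost_sample_le k))).
by rewrite -EFinM lee_fin mulrA.
Qed.

Lemma sqr_state_sample_mass i : exists2 D, 0 <= D & forall k c, 0 <= c ->
  (forall s, tk k <= s <= tk k.+1 -> c <= x s i 0 ^+ 2) ->
  c * (tk k.+1 - tk k) <= D * (V k - V k.+1).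
Proof.
have [c1 c1_ge0 y_le] := sqr_state_le_running_cost i.
exists (c1 * alpha) => [|k c c_ge0 c_le]; first by rewrite mulr_ge0 // ltW.
have g_cont : {within `[tk k, tk k.+1], continuous (fun s => c1 * running_cost k s)}.
  apply: continuous_withinM; first exact: continuous_within_cst.
  exact: running_cost_continuous (sample_time_ge0 k).
have := integral_itv_ge (tk_incr k) c_ge0 g_cont
  (fun s s_k => le_trans (c_le s s_k) (y_le k s)).
under eq_integral do rewrite EFinM.
rewrite ge0_integralZl_EFin //.
- have c1_ge0E : (0 <= c1%:E)%E by rewrite lee_fin.
  move=> /le_trans /(_ (lee_wpmul2l c1_ge0E (integral_running_cost_sample_le k))).
  by rewrite -EFinM lee_fin mulrA.
- by move=> t _; rewrite lee_fin running_cost_ge0.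
- apply: continuous_within_measurable; exact: running_cost_continuous (sample_time_ge0 k).
Qed.

Lemma sampled_state_cvg0 i : x t i 0 @[t --> +oo] --> 0.
Proof.
have [C C_ge0 osc] := sqr_state_sample_osc i.
have [D D_ge0 mass] := sqr_state_sample_mass i.
have V_ge0 k : 0 <= V k by exact: posdef_quadf_ge0.
have sqr_small :=
  sampled_barbalat tk_incr tk_oo V_ge0 sample_value_decr C_ge0 D_ge0 osc mass.
apply/cvgr0Pnorm_lt => e e_gt0.
apply: filterS (sqr_small _ (exprn_gt0 2 e_gt0)) => t.
by rewrite -[x t i 0 ^+ 2]real_normK ?num_real // ltr_pXn2r // nnegrE ltW.
Qed.

End SampledClosedLoop.

Theorem theorem1 (R : realType) (n m : nat)
  (A : 'M[R]_n) (B : 'M[R]_(n, m)) (Q : 'M[R]_n) (Rw : 'M[R]_m)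
  (Ft : 'M[R]_(m, n)) (Pt : 'M[R]_n) (alpha : R)
  (tk : nat -> R) (F : nat -> 'M[R]_(m, n)) (x0 : 'cV[R]_n) (x : R -> 'cV[R]_n) :
  stabilizable A B ->
  posdef Q -> posdef Rw ->
  hurwitz (A + B *m Ft) ->
  posdef Pt ->
  (A + B *m Ft)^T *m Pt + Pt *m (A + B *m Ft) + Q + Ft^T *m Rw *m Ft = 0 ->
  1 < alpha ->
  tk 0%N = 0 ->
  (forall k, tk k < tk k.+1) ->
  tk k @[k --> \oo] --> +oo ->
  sampled_trajectory A B tk F x0 x ->
  (forall (k : nat) (xi : R), 0 <= xi <= tk k.+1 - tk k ->
     (stage_cost Q Rw tk F x k xi
       <= (alpha * (quadf Pt (x (tk k)) - quadf Pt (x (tk k + xi))))%:E)%E) ->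
  (forall i : 'I_n, x t i 0 @[t --> +oo] --> 0) /\
  (x0 != 0 -> (perf_loss Q Rw Pt tk F x x0 <= (alpha - 1)%:E)%E).
Proof.
move=> _ Q_pd Rw_pd _ Pt_pd _ alpha_gt1 tk0 tk_incr tk_oo x_traj decr.
have alpha_gt0 : 0 < alpha by lra.
split => [i|].
  exact: sampled_state_cvg0 Q_pd Rw_pd Pt_pd alpha_gt0 tk0 tk_incr tk_oo x_traj decr i.
exact: perf_loss_le Pt_pd alpha_gt0 tk0 tk_incr x_traj decr.
Qed.
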